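(* (1) If $e$ is a quasi-identity of a ring, then so is $e^n$ for each $n\in\mathbb N$. (2) A contractive quasi-identity of a normed algebra is an idempotent, and hence its norm is either $0$ or $1$. (3) A contractive quasi-identity of an operator algebra $A\subset B(H)$ is unique if it exists, and it is Hermitian (hence an orthogonal projection).
   Context: A quasi-identity of a ring $R$ is an element $e\in R$ with $r=er+re-ere$ for all $r\in R$. A quasi-identity $e$ of a normed algebra is contractive if $\|e\|\le1$. An operator algebra $A\subset B(H)$ is a norm-closed subalgebra of $B(H)$ for a Hilbert space $H$. *)

From HB Require Import structures.
From mathcomp Require Import all_boot all_order all_algebra.
From mathcomp Require Import all_classical all_reals.
From mathcomp Require Import topology normedtype.
From mathcomp.real_closed Require Import complex.

Set Implicit Arguments.
Unset Strict Implicit.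
Unset Printing Implicit Defensive.

Import Order.TTheory GRing.Theory Num.Theory.
Local Open Scope ring_scope.

Definition nu_ring (R : zmodType) (mul : R -> R -> R) : Prop :=
  [/\ associative mul, left_distributive mul +%R & right_distributive mul +%R].

Definition quasi_identity (R : zmodType) (mul : R -> R -> R) (e : R) : Prop :=
  forall r : R, r = mul e r + mul r e - mul (mul e r) e.

(* e ^ n for n >= 1 in a (possibly non-unital) ring: e^1 = e, e^(n+1) = e * e^n.
   (For n = 0 the value is a junk value e, never used.) *)
Definition qpow (R : Type) (mul : R -> R -> R) (e : R) (n : nat) : R :=
  iter n.-1 (mul e) e.

Definition normed_algebra (K : numFieldType) (A : normedModType K)
    (mul : A -> A -> A) : Prop :=
  [/\ nu_ring mul,
      (forall (k : K) (a b : A), mul (k *: a) b = k *: mul a b),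
      (forall (k : K) (a b : A), mul a (k *: b) = k *: mul a b) &
      (forall a b : A, `|mul a b| <= `|a| * `|b|)].

Definition hnorm (R : realType) (H : lmodType R[i]) (ip : H -> H -> R[i]) (x : H)
  : R[i] := sqrtC (ip x x).

Definition is_hilbert (R : realType) (H : lmodType R[i]) (ip : H -> H -> R[i])
  : Prop :=
  [/\ (forall (a : R[i]) (x y z : H), ip (a *: x + y) z = a * ip x z + ip y z),
      (forall x y : H, ip y x = Num.conj (ip x y)),
      (forall x : H, 0 <= ip x x),
      (forall x : H, ip x x = 0 -> x = 0) &
      (forall u : nat -> H,
         (forall eps : R[i], 0 < eps -> exists N : nat, forall m n : nat,
            (N <= m)%N -> (N <= n)%N -> hnorm ip (u m - u n) < eps) ->
         exists l : H, forall eps : R[i], 0 < eps -> exists N : nat,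
            forall n : nat, (N <= n)%N -> hnorm ip (u n - l) < eps)].

Definition opnorm_le (R : realType) (H : lmodType R[i]) (ip : H -> H -> R[i])
    (T : H -> H) (c : R[i]) : Prop :=
  forall x : H, hnorm ip (T x) <= c * hnorm ip x.

Definition bounded_op (R : realType) (H : lmodType R[i]) (ip : H -> H -> R[i])
    (T : H -> H) : Prop :=
  (forall (a : R[i]) (x y : H), T (a *: x + y) = a *: T x + T y) /\
  exists M : R[i], opnorm_le ip T M.

Definition operator_algebra (R : realType) (H : lmodType R[i])
    (ip : H -> H -> R[i]) (A : (H -> H) -> Prop) : Prop :=
  (forall T, A T -> bounded_op ip T) /\
  A (fun _ => 0) /\
  (forall S T, A S -> A T -> A (fun x => S x + T x)) /\
  (forall (a : R[i]) T, A T -> A (fun x => a *: T x)) /\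
  (forall S T, A S -> A T -> A (fun x => S (T x))) /\
  (forall T, bounded_op ip T ->
     (forall eps : R[i], 0 < eps ->
        exists S, A S /\ opnorm_le ip (fun x => T x - S x) eps) ->
     A T).

(* Quasi-identity of the ring A (multiplication = composition), written
   pointwise: r = e r + r e - e r e for every r in A. *)
Definition op_quasi_identity (R : realType) (H : lmodType R[i])
    (A : (H -> H) -> Prop) (e : H -> H) : Prop :=
  A e /\ forall r, A r -> forall x : H, r x = e (r x) + r (e x) - e (r (e x)).

From HB Require Import structures.
From mathcomp Require Import all_boot all_order all_algebra.
From mathcomp Require Import all_classical all_reals.
From mathcomp Require Import topology normedtype.
From mathcomp.real_closed Require Import complex.
From mathcomp Require Import ring.

Import Order.TTheory GRing.Theory Num.Theory.
Local Open Scope ring_scope.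

Set Implicit Arguments.
Unset Strict Implicit.
Unset Printing Implicit Defensive.

(* In the unitization, r = e r + r e - e r e says (1 - e) r (1 - e) = 0.  Since
   1 - x a = (1 - x) + x (1 - a) and 1 - b y = (1 - b) + b (1 - y), the pairs
   (x, y) with (1 - x) R (1 - y) = 0 are stable under multiplying either entry
   by e, which gives (1).
   Taking r = e^n shows that e, e^2, e^3, ... is an arithmetic progression; when
   e is contractive it is bounded, hence constant over an archimedean field, so
   e^2 = e and |e| <= |e|^2 <= 1 forces |e| to be 0 or 1.
   In an operator algebra, r = e makes w = e (e x) - e x a fixed vector of e with
   e (e x) = e x + w; a contraction has no such Jordan block, so e is idempotent,
   and a contractive idempotent on a Hilbert space is an orthogonal projection.
   For two such projections e and f, the relation for e at r = f shows that
   f u = e (f u) whenever e u = 0, so |f u|^2 = <u, f u> = <e u, f u> = 0.  Thus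
   f e = f, likewise e f = e, and self-adjointness gives e = f. *)

Lemma subr_midpoint (V : zmodType) (x y z : V) : x = y + y - z -> z - y = y - x.
Proof. by move=> ->; rewrite opprB addrCA opprD addNKr. Qed.

Section NonUnitalRing.
Variables (R : zmodType) (mul : R -> R -> R).
Hypotheses (mulA : associative mul) (mulDl : left_distributive mul +%R)
  (mulDr : right_distributive mul +%R).

Lemma nu_mulBl x y z : mul (x - y) z = mul x z - mul y z.
Proof. by apply: (addIr (mul y z)); rewrite -mulDl !subrK. Qed.

Lemma nu_mulBr x y z : mul z (x - y) = mul z x - mul z y.
Proof. by apply: (addIr (mul z y)); rewrite -mulDr !subrK. Qed.

Lemma nu_mulr0 x : mul x 0 = 0.
Proof. by apply: (addIr (mul x 0)); rewrite -mulDr !add0r. Qed.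

(* [lcompl x r] and [rcompl y r] stand for (1 - x) r and r (1 - y) in the unitization. *)
Definition lcompl x r := r - mul x r.
Definition rcompl y r := r - mul r y.

Definition quasi_unit_pair x y := forall r, rcompl y (lcompl x r) = 0.

Lemma quasi_unit_pairE e r :
  (rcompl e (lcompl e r) == 0) = (r == mul e r + mul r e - mul (mul e r) e).
Proof. by rewrite /rcompl /lcompl nu_mulBl subr_eq0 subr_eq addrC addrA. Qed.

Lemma quasi_identityE e : quasi_identity mul e <-> quasi_unit_pair e e.
Proof.
split=> qe r; apply/eqP; first by rewrite quasi_unit_pairE; apply/eqP.
by rewrite -quasi_unit_pairE; apply/eqP.
Qed.

Lemma lcompl_mul x a r : lcompl (mul x a) r = lcompl x r + mul x (lcompl a r).
Proof. by rewrite /lcompl nu_mulBr mulA addrA subrK. Qed.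

Lemma rcompl_mul b y s : rcompl (mul b y) s = rcompl b s + rcompl y (mul s b).
Proof. by rewrite /rcompl mulA addrA subrK. Qed.

Lemma rcomplD y s t : rcompl y (s + t) = rcompl y s + rcompl y t.
Proof. by rewrite /rcompl mulDl opprD addrACA. Qed.

Lemma rcompl_mull x y s : rcompl y (mul x s) = mul x (rcompl y s).
Proof. by rewrite /rcompl nu_mulBr mulA. Qed.

Lemma lcompl_mulr x y s : lcompl x (mul s y) = mul (lcompl x s) y.
Proof. by rewrite /lcompl nu_mulBl mulA. Qed.

Lemma quasi_unit_pair_mull x a y :
  quasi_unit_pair x y -> quasi_unit_pair a y -> quasi_unit_pair (mul x a) y.
Proof.
by move=> xy ay r; rewrite lcompl_mul rcomplD rcompl_mull xy ay nu_mulr0 addr0.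
Qed.

Lemma quasi_unit_pair_mulr x y b :
  quasi_unit_pair x y -> quasi_unit_pair x b -> quasi_unit_pair x (mul y b).
Proof. by move=> xy xb r; rewrite rcompl_mul -lcompl_mulr xy xb addr0. Qed.

Lemma quasi_unit_pair_iter e : quasi_unit_pair e e ->
  forall m n, quasi_unit_pair (iter m (mul e) e) (iter n (mul e) e).
Proof.
move=> ee; have e_pair n : quasi_unit_pair e (iter n (mul e) e).
  by elim: n => [|n IHn] //=; apply: quasi_unit_pair_mulr.
by elim=> [|m IHm] n //=; apply: quasi_unit_pair_mull (e_pair n) (IHm n).
Qed.

Lemma quasi_identity_qpow e :
  quasi_identity mul e -> forall n, (0 < n)%N -> quasi_identity mul (qpow mul e n).
Proof.
by move=> /quasi_identityE qe [|n] // _; apply/quasi_identityE/quasi_unit_pair_iter.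
Qed.

Lemma iter_mulC e n : mul (iter n (mul e) e) e = mul e (iter n (mul e) e).
Proof. by elim: n => [|n IHn] //=; rewrite -mulA IHn. Qed.

Lemma quasi_identity_iter_arithmetic e : quasi_identity mul e ->
  forall n, iter n.+2 (mul e) e - iter n.+1 (mul e) e
            = iter n.+1 (mul e) e - iter n (mul e) e.
Proof.
move=> qe n; apply: subr_midpoint.
by rewrite {1}[iter n _ _]qe iter_mulC -/(iter n.+1 _ _) iter_mulC.
Qed.

End NonUnitalRing.

Lemma arithmeticE (V : zmodType) (p : nat -> V) :
  (forall n, p n.+2 - p n.+1 = p n.+1 - p n) ->
  forall n, p n = p 0%N + (p 1%N - p 0%N) *+ n.
Proof.
move=> step; have diff n : p n.+1 - p n = p 1%N - p 0%N.
  by elim: n => [|n IHn] //; rewrite step.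
elim=> [|n IHn]; first by rewrite addr0.
by rewrite mulrSr addrA -IHn -(diff n) addrC subrK.
Qed.

Lemma archi_mulrn_le_eq0 (K : archiNumFieldType) (x c : K) :
  0 <= x -> (forall n, x *+ n <= c) -> x = 0.
Proof.
move=> x_ge0 le_c; apply/eqP; apply: contraT => x_neq0.
have x_gt0 : 0 < x by rewrite lt_def x_neq0.
have c_ge0 : 0 <= c := le_c 0%N.
have := archi_boundP (divr_ge0 c_ge0 x_ge0).
rewrite ltr_pdivrMr // mulr_natl => /lt_le_trans/(_ (le_c _)).
by rewrite ltxx.
Qed.

Lemma bounded_arithmetic_const (K : archiNumFieldType) (V : normedZmodType K)
    (p : nat -> V) (M : K) :
  (forall n, p n.+2 - p n.+1 = p n.+1 - p n) -> (forall n, `|p n| <= M) ->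
  p 1%N = p 0%N.
Proof.
move=> step le_M; apply/eqP; rewrite -subr_eq0 -normr_eq0; apply/eqP.
apply: (@archi_mulrn_le_eq0 _ _ (M + M)) => // n.
rewrite -normrMn; have -> : (p 1%N - p 0%N) *+ n = p n - p 0%N.
  by rewrite (arithmeticE step n) [RHS]addrC addKr.
by apply: le_trans (ler_normB _ _) _; apply: lerD.
Qed.

Lemma le_mulrr_le1 (K : numDomainType) (x : K) :
  0 <= x -> x <= 1 -> x <= x * x -> x = 0 \/ x = 1.
Proof.
move=> x_ge0 x_le1 x_le_sqr; have [->|x_neq0] := eqVneq x 0; [by left | right].
have x_gt0 : 0 < x by rewrite lt_def x_neq0.
by apply: le_anti; rewrite x_le1 -(ler_pM2l x_gt0) mulr1.
Qed.

Section NormedAlgebra.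
Variables (K : archiNumFieldType) (A : normedZmodType K) (mul : A -> A -> A).
Hypotheses (mulA : associative mul) (ler_normM : forall a b, `|mul a b| <= `|a| * `|b|).
Variable e : A.
Hypotheses (qe : quasi_identity mul e) (e_le1 : `|e| <= 1).

Lemma contractive_quasi_identity_idem : mul e e = e.
Proof.
have norm_pow n : `|iter n (mul e) e| <= 1.
  elim: n => [|n IHn] //=; apply: le_trans (ler_normM _ _) _.
  by rewrite -[1](mulr1 1) ler_pM.
exact: (@bounded_arithmetic_const _ _ (fun n => iter n (mul e) e) 1
  (quasi_identity_iter_arithmetic mulA qe) norm_pow).
Qed.

Lemma contractive_quasi_identity_norm : `|e| = 0 \/ `|e| = 1.
Proof.
apply: le_mulrr_le1 => //.
by rewrite -{1}contractive_quasi_identity_idem ler_normM.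
Qed.

End NormedAlgebra.

Lemma normed_algebra_contractive_quasi_identity (K : archiNumFieldType)
    (A : normedModType K) (mul : A -> A -> A) (e : A) :
  normed_algebra mul -> quasi_identity mul e -> `|e| <= 1 ->
  mul e e = e /\ (`|e| = 0 \/ `|e| = 1).
Proof.
move=> [[mulA _ _] _ _ ler_normM] qe e_le1.
by split; [exact: contractive_quasi_identity_idem | exact: contractive_quasi_identity_norm].
Qed.

Lemma complex_archimedean (R : realType) : Num.archimedean_axiom R[i].
Proof.
move=> x; rewrite normc_def.
exists (Num.Def.archi_bound (Num.sqrt (complex.Re x ^+ 2 + complex.Im x ^+ 2))).
by rewrite -(rmorph_nat (real_complex R)) ltcR archi_boundP ?sqrtr_ge0.
Qed.

HB.instance Definition _ (R : realType) :=
  Num.NumDomain_bounded_isArchimedean.Build R[i] (@complex_archimedean R).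

Section InnerProduct.
Variables (C : numClosedFieldType) (H : lmodType C) (ip : H -> H -> C).
Hypotheses (ipZDl : forall a x y z, ip (a *: x + y) z = a * ip x z + ip y z)
  (ipC : forall x y, ip y x = (ip x y)^*) (ip_ge0 : forall x, 0 <= ip x x)
  (ip_eq0 : forall x, ip x x = 0 -> x = 0).

Lemma ipDl x y z : ip (x + y) z = ip x z + ip y z.
Proof. by have := ipZDl 1 x y z; rewrite scale1r mul1r. Qed.

Lemma ip0l z : ip 0 z = 0.
Proof. by apply: (addrI (ip 0 z)); rewrite -ipDl !addr0. Qed.

Lemma ipZl a x z : ip (a *: x) z = a * ip x z.
Proof. by have := ipZDl a x 0 z; rewrite !addr0 ip0l addr0. Qed.

Lemma ipBl x y z : ip (x - y) z = ip x z - ip y z.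
Proof. by rewrite ipDl -scaleN1r ipZl mulN1r. Qed.

Lemma ipDr z x y : ip z (x + y) = ip z x + ip z y.
Proof. by rewrite ipC ipDl rmorphD /= -!ipC. Qed.

Lemma ipZr z a x : ip z (a *: x) = a^* * ip z x.
Proof. by rewrite ipC ipZl rmorphM /= -ipC. Qed.

Lemma ip_eql a b : (forall y, ip a y = ip b y) -> a = b.
Proof.
move=> eq_ab; apply/eqP; rewrite -subr_eq0; apply/eqP/ip_eq0.
by rewrite ipBl eq_ab subrr.
Qed.

Lemma ip_orthogonal_of_min y z :
  (forall t, ip y y <= ip (y + t *: z) (y + t *: z)) -> ip z y = 0.
Proof.
move=> y_min; pose m := ip z y; pose c := ip z z; pose s := (c + 1)^-1.
have c1_gt0 : 0 < c + 1 := ltr_wpDl (ip_ge0 z) ltr01.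
have s_gt0 : 0 < s by rewrite invr_gt0.
have sc_lt1 : s * c < 1 by rewrite mulrC ltr_pdivrMr // mul1r ltrDl.
have sJ : s^* = s by apply/conj_Creal/gtr0_real.
(* At t = - s m^* the excess |y + t z|^2 - |y|^2 is s |m|^2 (s c - 2), and s c < 1. *)
have := y_min (- (s * m^*)).
rewrite !(ipDl, ipDr, ipZl, ipZr) -addrA lerDl [ip y z]ipC -/m -/c.
rewrite rmorphN rmorphM /= sJ conjCK.
have -> : - (s * m) * m^* + (- (s * m^*) * m + - (s * m^*) * (- (s * m) * c))
          = s * (m * m^*) * (s * c - 2) by ring.
have sc2_lt0 : s * c - 2 < 0 by rewrite subr_lt0 (lt_trans sc_lt1) ?ltr1n.
rewrite -normCK (nmulr_lge0 _ sc2_lt0) (pmulr_rle0 _ s_gt0) => m2_le0.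
apply/eqP; rewrite -normr_eq0 -sqrf_eq0 eq_le m2_le0.
by rewrite exprn_ge0 ?normr_ge0.
Qed.

Lemma ip_drift_eq0 u w :
  (forall s, 0 <= s ->
     ip (u + (s + 1) *: w) (u + (s + 1) *: w) <= ip (u + s *: w) (u + s *: w)) ->
  w = 0.
Proof.
move=> drift; apply: ip_eq0; pose c := ip w w; pose b := ip u w + ip w u.
have b_real : b \is Num.real by rewrite CrealE rmorphD /= -!ipC addrC.
have excess_le0 s : 0 <= s -> b + (s * c) *+ 2 + c <= 0.
  move=> s_ge0; have s1_ge0 : 0 <= s + 1 by rewrite addr_ge0.
  have := drift s s_ge0; rewrite -subr_le0.
  rewrite !(ipDl, ipDr, ipZl, ipZr) !conj_Creal ?ger0_real //.
  by congr (_ <= 0); rewrite /b /c; ring.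
(* If c > 0, the choice s = |b| / c violates [excess_le0], since b + |b| >= 0. *)
apply/eqP; apply: contraT => c_neq0; have c_gt0 : 0 < c by rewrite lt_def c_neq0 ip_ge0.
have := excess_le0 _ (divr_ge0 (normr_ge0 b) (ltW c_gt0)); rewrite divfK //.
have -> : b + `|b| *+ 2 + c = (b + `|b|) + (`|b| + c) by ring.
have b_ge : 0 <= b + `|b| by rewrite -lerBlDr sub0r real_lerNnormlW.
by rewrite lt_geF // ltr_wpDl // ltr_wpDl.
Qed.

Section Contraction.
Variable e : H -> H.
Hypotheses (e_lin : linear e) (e_contr : forall x, ip (e x) (e x) <= ip x x).
HB.instance Definition _ := GRing.isLinear.Build C H H *:%R e e_lin.

Lemma contraction_drift_eq0 u w : e w = w -> e u = u + w -> w = 0.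
Proof.
move=> ew eu; apply: (ip_drift_eq0 (u := u)) => s _.
have -> : u + (s + 1) *: w = e (u + s *: w).
  by rewrite linearD linearZ /= ew eu scalerDl scale1r [s *: w + w]addrC addrA.
exact: e_contr.
Qed.

Lemma contraction_orthogonal y z : e y = y -> e z = 0 -> ip z y = 0.
Proof.
move=> ey ez; apply: ip_orthogonal_of_min => t.
by have := e_contr (y + t *: z); rewrite linearD linearZ /= ey ez scaler0 addr0.
Qed.

Lemma contraction_quasi_idem :
  (forall x, e x = e (e x) + e (e x) - e (e (e x))) -> forall x, e (e x) = e x.
Proof.
move=> qe x; apply/eqP; rewrite -subr_eq0; apply/eqP.
apply: (contraction_drift_eq0 (u := e x)); last by rewrite addrC subrK.
by rewrite linearB /=; apply/subr_midpoint/qe.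
Qed.

Hypothesis e_idem : forall x, e (e x) = e x.

Lemma contraction_idem_selfadjoint x y : ip (e x) y = ip x (e y).
Proof.
have orth a b : ip (a - e a) (e b) = 0.
  by apply: contraction_orthogonal; rewrite ?linearB /= e_idem ?subrr.
rewrite -[y in LHS](subrK (e y)) -[x in RHS](subrK (e x)) ipDr ipDl orth add0r.
by rewrite ipC orth conjC0 add0r.
Qed.

End Contraction.

Section SelfadjointProjections.
Variables e f : H -> H.
Hypotheses (e_lin : linear e) (f_lin : linear f).
HB.instance Definition _ := GRing.isLinear.Build C H H *:%R e e_lin.
HB.instance Definition _ := GRing.isLinear.Build C H H *:%R f f_lin.
Hypotheses (e_idem : forall x, e (e x) = e x) (f_idem : forall x, f (f x) = f x).
Hypotheses (e_sa : forall x y, ip (e x) y = ip x (e y))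
  (f_sa : forall x y, ip (f x) y = ip x (f y)).

Lemma projection_quasi_identity_absorb :
  (forall x, f x = e (f x) + f (e x) - e (f (e x))) -> forall x, f (e x) = f x.
Proof.
move=> qe x; pose u := x - e x.
have eu : e u = 0 by rewrite linearB /= e_idem subrr.
have fu : f u = e (f u) by rewrite {1}qe eu !linear0 !addr0.
have : ip (f u) (f u) = 0 by rewrite f_sa f_idem fu -e_sa eu ip0l.
by move/ip_eq0; rewrite linearB /= => /eqP; rewrite subr_eq0 eq_sym => /eqP.
Qed.

Lemma selfadjoint_projections_eq :
  (forall x, f (e x) = f x) -> (forall x, e (f x) = e x) -> e = f.
Proof.
move=> fe ef; apply: boolp.funext => x; apply: ip_eql => y.
by rewrite -ef e_sa f_sa fe -f_sa.
Qed.

End SelfadjointProjections.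

End InnerProduct.

Section OperatorAlgebra.
Variables (R : realType) (H : lmodType R[i]) (ip : H -> H -> R[i]).
Hypothesis ip_hilbert : is_hilbert ip.

Lemma opnorm_le1_contraction T : opnorm_le ip T 1 -> forall x, ip (T x) (T x) <= ip x x.
Proof.
have ip_nneg x : ip x x \is Num.nneg by case: ip_hilbert => _ _ ip_ge0 _ _; rewrite nnegrE.
by move=> T_le1 x; have := T_le1 x; rewrite /hnorm mul1r ler_sqrtC.
Qed.

Variable A : (H -> H) -> Prop.
Hypothesis A_opalg : operator_algebra ip A.

Lemma op_quasi_identity_projection e : op_quasi_identity A e -> opnorm_le ip e 1 ->
  [/\ linear e, forall x, e (e x) = e x & forall x y, ip (e x) y = ip x (e y)].
Proof.
case: ip_hilbert => ipZDl ipC ip_ge0 ip_eq0 _ [Ae qe] /opnorm_le1_contraction e_contr.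
have [e_lin _] := A_opalg.1 e Ae.
have e_idem := contraction_quasi_idem ipZDl ipC ip_ge0 ip_eq0 e_lin e_contr (qe e Ae).
by split=> //; exact: (contraction_idem_selfadjoint ipZDl ipC ip_ge0 e_lin e_contr e_idem).
Qed.

Lemma op_quasi_identity_unique e f :
  op_quasi_identity A e -> opnorm_le ip e 1 ->
  op_quasi_identity A f -> opnorm_le ip f 1 -> e = f.
Proof.
move=> qe e1 qf f1; case: ip_hilbert => ipZDl ipC _ ip_eq0 _.
have [e_lin e_idem e_sa] := op_quasi_identity_projection qe e1.
have [f_lin f_idem f_sa] := op_quasi_identity_projection qf f1.
have absorb := projection_quasi_identity_absorb ipZDl ip_eq0.
apply: (selfadjoint_projections_eq ipZDl ip_eq0 e_sa f_sa).
  exact: (absorb e f e_lin f_lin e_idem f_idem e_sa f_sa (qe.2 f qf.1)).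
exact: (absorb f e f_lin e_lin f_idem e_idem f_sa e_sa (qf.2 e qe.1)).
Qed.

End OperatorAlgebra.

Theorem proposition4p4 :
  (* (1) powers of quasi-identities in a ring *)
  (forall (R : zmodType) (mul : R -> R -> R) (e : R),
     nu_ring mul -> quasi_identity mul e ->
     forall n : nat, (0 < n)%N -> quasi_identity mul (qpow mul e n)) /\
  (* (2) contractive quasi-identities of real normed algebras *)
  (forall (R : realType) (A : normedModType R) (mul : A -> A -> A) (e : A),
     normed_algebra mul -> quasi_identity mul e -> `|e| <= 1 ->
     mul e e = e /\ (`|e| = 0 \/ `|e| = 1)) /\
  (* (2) contractive quasi-identities of complex normed algebras *)
  (forall (R : realType) (A : normedModType R[i]) (mul : A -> A -> A) (e : A),
     normed_algebra mul -> quasi_identity mul e -> `|e| <= 1 ->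
     mul e e = e /\ (`|e| = 0 \/ `|e| = 1)) /\
  (* (3) operator algebras *)
  (forall (R : realType) (H : lmodType R[i]) (ip : H -> H -> R[i])
          (A : (H -> H) -> Prop),
     is_hilbert ip -> operator_algebra ip A ->
     (forall e e' : H -> H,
        op_quasi_identity A e -> opnorm_le ip e 1 ->
        op_quasi_identity A e' -> opnorm_le ip e' 1 -> e = e') /\
     (forall e : H -> H,
        op_quasi_identity A e -> opnorm_le ip e 1 ->
        (forall x y : H, ip (e x) y = ip x (e y)) /\
        (forall x : H, e (e x) = e x))).
Proof.
split; first by move=> R mul e [mulA mulDl mulDr]; exact: quasi_identity_qpow.
split; first by move=> R; exact: (@normed_algebra_contractive_quasi_identity R).
split; first by move=> R; exact: (@normed_algebra_contractive_quasi_identity R[i]).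
move=> R H ip A ip_hilbert A_opalg; split; first exact: op_quasi_identity_unique.
by move=> e qe e1; have [_ e_idem e_sa] := op_quasi_identity_projection ip_hilbert A_opalg qe e1.
Qed.
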